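(* Let $(F_n)_{n\ge0}$ be the Fibonacci sequence ($F_0=0$, $F_1=1$, $F_{n+2}=F_{n+1}+F_n$) and $\alpha=(1+\sqrt5)/2$. Let $p\ge 5$ be a prime and $c$ an integer, and suppose $c=F_{k_i}-p^{\ell_i}$ for $i=1,\dots,m$, where $(k_i,\ell_i)$ are all the distinct pairs of integers with $k_i\ge 2$, $\ell_i\ge 0$ satisfying this, indexed so that $\ell_1>\ell_2>\cdots>\ell_m\ge 0$ (then $k_1>k_2>\cdots>k_m\ge 2$). Then for every $i=1,\dots,m-1$, $$k_i\log\alpha-\ell_i\log p\in\big(\log(\alpha/1.25),\,4\log\alpha\big)\subset(0.25,\,2).$$ *)

From Stdlib Require Import Reals ZArith Znumtheory Lra Lia.
Open Scope R_scope.

Fixpoint fib (n : nat) : nat :=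
  match n with
  | O => O
  | S n' => match n' with
            | O => 1%nat
            | S n'' => (fib n' + fib n'')%nat
            end
  end.

Definition alpha : R := (1 + sqrt 5) / 2.

Definition is_sol (p : nat) (c : Z) (k l : nat) : Prop :=
  (2 <= k)%nat /\ (Z.of_nat (fib k) - Z.of_nat p ^ Z.of_nat l = c)%Z.

From Stdlib Require Import Reals ZArith Znumtheory Lra Lia.
Open Scope R_scope.

(* If (a, l) and (b, l') solve F_k - p^l = c with l' < l, then
   F_a - F_b = p^l - p^l' lies in [(4/5) p^l, p^l) because p >= 5.  Since
   F_b >= 1 this gives F_a > (4/5) p^l, while F_b <= F_(a-1) gives
   F_(a-2) < p^l.  With alpha^(n-1) <= alpha F_n and F_n <= alpha^(n-1), the
   ratio alpha^a / p^l lies in (alpha / 1.25, alpha^4); taking logarithms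
   gives the bracket. *)

Lemma sqrt5_bounds : 2225/1000 < sqrt 5 < 2245/1000.
Proof.
  pose proof (sqrt_pos 5) as s_ge0.
  pose proof (sqrt_sqrt 5 ltac:(lra)) as s_sqr.
  split; nra.
Qed.

Lemma alpha_bounds : 1612/1000 < alpha < 1623/1000.
Proof. unfold alpha; pose proof sqrt5_bounds; lra. Qed.

Lemma alpha_sqr : alpha ^ 2 = alpha + 1.
Proof. unfold alpha; pose proof (sqrt_sqrt 5 ltac:(lra)); simpl; nra. Qed.

Lemma alpha_pow_SS n : alpha ^ S (S n) = alpha ^ S n + alpha ^ n.
Proof.
  replace (S (S n)) with (n + 2)%nat by lia.
  rewrite pow_add, alpha_sqr; simpl; ring.
Qed.

Lemma fib_SS n : fib (S (S n)) = (fib (S n) + fib n)%nat.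
Proof. reflexivity. Qed.

Lemma INR_fib_SS n : INR (fib (S (S n))) = INR (fib (S n)) + INR (fib n).
Proof. now rewrite fib_SS, plus_INR. Qed.

Lemma fib_le_succ n : (fib n <= fib (S n))%nat.
Proof. destruct n as [|n]; [simpl; lia | rewrite fib_SS; lia]. Qed.

Lemma fib_le_mono a b : (a <= b)%nat -> (fib a <= fib b)%nat.
Proof. induction 1 as [|b _ IH]; [lia | pose proof (fib_le_succ b); lia]. Qed.

Lemma fib_le_alpha_pow n : INR (fib (S n)) <= alpha ^ n.
Proof.
  pose proof alpha_bounds as [a_gt _].
  enough (H : INR (fib (S n)) <= alpha ^ n /\ INR (fib (S (S n))) <= alpha ^ S n)
    by apply H.
  induction n as [|n [IH1 IH2]]; [simpl; lra|].
  split; [exact IH2|].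
  rewrite INR_fib_SS, alpha_pow_SS; lra.
Qed.

Lemma alpha_pow_le_fib n : alpha ^ n <= alpha * INR (fib (S n)).
Proof.
  pose proof alpha_bounds as [a_gt _].
  enough (H : alpha ^ n <= alpha * INR (fib (S n))
              /\ alpha ^ S n <= alpha * INR (fib (S (S n)))) by apply H.
  induction n as [|n [IH1 IH2]]; [simpl; lra|].
  split; [exact IH2|].
  rewrite INR_fib_SS, alpha_pow_SS; lra.
Qed.

Lemma ln_le_sub1 x : 0 < x -> ln x <= x - 1.
Proof. intros x_gt0; pose proof (exp_ineq1_le (ln x)); rewrite exp_ln in *; lra. Qed.

Lemma ln_alpha_div_gt_quarter : 1 / 4 < ln (alpha / (5 / 4)).
Proof.
  pose proof alpha_bounds as [a_gt _].
  (* (64/63)^16 < 1.29 < alpha / 1.25 and ln (64/63) >= 1/64 *)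
  assert (ln_ge : 1 / 64 <= ln (64 / 63)).
  { replace (64 / 63) with (/ (63 / 64)) by field.
    rewrite ln_Rinv by lra; pose proof (ln_le_sub1 (63 / 64) ltac:(lra)); lra. }
  assert (ln_lt : ln ((64 / 63) ^ 16) < ln (alpha / (5 / 4))).
  { apply ln_increasing; [apply pow_lt; lra | simpl; lra]. }
  rewrite ln_pow in ln_lt by lra; simpl INR in ln_lt; lra.
Qed.

Lemma four_ln_alpha_lt_2 : 4 * ln alpha < 2.
Proof.
  pose proof alpha_bounds as [a_gt a_lt].
  (* alpha < 1.623 < (17/16)^8 and ln (17/16) <= 1/16 *)
  assert (ln_le : ln (17 / 16) <= 1 / 16)
    by (pose proof (ln_le_sub1 (17 / 16) ltac:(lra)); lra).
  assert (ln_lt : ln alpha < ln ((17 / 16) ^ 8))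
    by (apply ln_increasing; simpl; lra).
  rewrite ln_pow in ln_lt by lra; simpl INR in ln_lt; lra.
Qed.

Lemma ln_lt_pow_diff (x y C : R) (a n : nat) :
  0 < x -> 0 < y -> 0 < C ->
  C * y ^ n < x ^ a -> ln C < INR a * ln x - INR n * ln y.
Proof.
  intros x_gt0 y_gt0 C_gt0 lt_pow.
  assert (yn_gt0 : 0 < y ^ n) by (apply pow_lt; lra).
  pose proof (ln_increasing _ _ (Rmult_lt_0_compat _ _ C_gt0 yn_gt0) lt_pow).
  rewrite ln_mult, !ln_pow in * by lra; lra.
Qed.

Lemma pow_diff_lt_ln (x y C : R) (a n : nat) :
  0 < x -> 0 < y ->
  x ^ a < C * y ^ n -> INR a * ln x - INR n * ln y < ln C.
Proof.
  intros x_gt0 y_gt0 lt_pow.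
  assert (yn_gt0 : 0 < y ^ n) by (apply pow_lt; lra).
  assert (xa_gt0 : 0 < x ^ a) by (apply pow_lt; lra).
  assert (C_gt0 : 0 < C) by (apply (Rmult_lt_reg_r (y ^ n)); lra).
  pose proof (ln_increasing _ _ xa_gt0 lt_pow).
  rewrite ln_mult, !ln_pow in * by lra; lra.
Qed.

Lemma is_sol_fib_add_pow p c a b la lb :
  is_sol p c a la -> is_sol p c b lb -> (fib a + p ^ lb = fib b + p ^ la)%nat.
Proof.
  intros [_ Ea] [_ Eb]; rewrite <- Nat2Z.inj_pow in Ea, Eb; lia.
Qed.

Section TwoSolutions.

Variables (p a b l l' : nat).
Hypotheses (p_ge5 : (5 <= p)%nat) (b_ge2 : (2 <= b)%nat) (l'_lt : (l' < l)%nat).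
Hypothesis fib_pow_eq : (fib a + p ^ l' = fib b + p ^ l)%nat.

Lemma two_sols_k_lt : (b < a)%nat.
Proof.
  assert (p ^ l' < p ^ l)%nat by (apply Nat.pow_lt_mono_r; lia).
  destruct (Nat.lt_ge_cases b a) as [|a_le]; [assumption|].
  pose proof (fib_le_mono _ _ a_le); lia.
Qed.

Lemma two_sols_fib_gt : (4 * p ^ l < 5 * fib a)%nat.
Proof.
  assert (fib_b_ge1 : (1 <= fib b)%nat) by (apply (fib_le_mono 2); lia).
  assert (pow_le : (5 * p ^ l' <= p ^ l)%nat).
  { destruct l as [|l0]; [lia|].
    rewrite Nat.pow_succ_r'; apply Nat.mul_le_mono; [lia|].
    apply Nat.pow_le_mono_r; lia. }
  lia.
Qed.

Lemma two_sols_fib_pred_lt : (fib (a - 2) < p ^ l)%nat.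
Proof.
  pose proof two_sols_k_lt as b_lt.
  assert (fib_b_le : (fib b <= fib (a - 1))%nat) by (apply fib_le_mono; lia).
  assert (0 < p ^ l')%nat by (apply Nat.neq_0_lt_0, Nat.pow_nonzero; lia).
  destruct a as [|[|a0]]; [lia|lia|].
  replace (S (S a0) - 1)%nat with (S a0) in fib_b_le by lia.
  replace (S (S a0) - 2)%nat with a0 by lia.
  rewrite fib_SS in fib_pow_eq; lia.
Qed.

Lemma two_sols_alpha_pow_bounds :
  alpha / (5 / 4) * INR p ^ l < alpha ^ a < alpha ^ 4 * INR p ^ l.
Proof.
  pose proof alpha_bounds as [a_gt _].
  pose proof two_sols_k_lt as b_lt.
  pose proof (lt_INR _ _ two_sols_fib_gt) as fib_gt.
  pose proof (lt_INR _ _ two_sols_fib_pred_lt) as fib_pred_lt.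
  rewrite !mult_INR, pow_INR in fib_gt; rewrite pow_INR in fib_pred_lt.
  replace (INR 4) with 4 in fib_gt by (simpl; ring).
  replace (INR 5) with 5 in fib_gt by (simpl; ring).
  assert (0 < INR p ^ l) by (apply pow_lt, lt_0_INR; lia).
  split.
  - destruct a as [|a0]; [lia|].
    pose proof (fib_le_alpha_pow a0); simpl pow; nra.
  - destruct a as [|[|[|a0]]]; try lia.
    replace (S (S (S a0)) - 2)%nat with (S a0) in fib_pred_lt by lia.
    pose proof (alpha_pow_le_fib a0).
    replace (alpha ^ S (S (S a0))) with (alpha ^ 3 * alpha ^ a0) by (simpl; ring).
    replace (alpha ^ 4) with (alpha ^ 3 * alpha) by (simpl; ring).
    rewrite Rmult_assoc; apply Rmult_lt_compat_l; [apply pow_lt; lra | nra].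
Qed.

End TwoSolutions.

Theorem lemma3p1 (p : nat) (c : Z) (m : nat) (k l : nat -> nat)
  (hp : prime (Z.of_nat p)) (hp5 : (5 <= p)%nat)
  (hsol : forall i, (i < m)%nat -> is_sol p c (k i) (l i))
  (hdec : forall i, (S i < m)%nat -> (l (S i) < l i)%nat)
  (hall : forall kk ll, is_sol p c kk ll ->
            exists i, (i < m)%nat /\ k i = kk /\ l i = ll) :
  forall i, (S i < m)%nat ->
    ln (alpha / (5 / 4)) < INR (k i) * ln alpha - INR (l i) * ln (INR p) < 4 * ln alpha
    /\ 1 / 4 < ln (alpha / (5 / 4)) /\ 4 * ln alpha < 2.
Proof.
  intros i Si_lt.
  split; [|exact (conj ln_alpha_div_gt_quarter four_ln_alpha_lt_2)].
  pose proof (hsol i ltac:(lia)) as sol_i.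
  pose proof (hsol (S i) Si_lt) as sol_Si.
  destruct (two_sols_alpha_pow_bounds p (k i) (k (S i)) (l i) (l (S i))
              hp5 (proj1 sol_Si) (hdec i Si_lt)
              (is_sol_fib_add_pow p c _ _ _ _ sol_i sol_Si)) as [lo hi].
  pose proof alpha_bounds as [a_gt _].
  assert (p_gt0 : 0 < INR p) by (apply lt_0_INR; lia).
  split.
  - apply ln_lt_pow_diff; try assumption; lra.
  - replace (4 * ln alpha) with (ln (alpha ^ 4)) by (rewrite ln_pow by lra; simpl; ring).
    apply pow_diff_lt_ln; assumption || lra.
Qed.
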